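(* Let $G$ be a finite group and let $H\leq G$. Consider the square matrix \[ \bigl( |P\backslash G /Q| \bigr)_{P,Q}, \] whose rows and columns are indexed by the $G$-conjugacy classes of subgroups of $H$ (with $P,Q$ representatives of these classes), and whose $(P,Q)$-entry is the number of $(P,Q)$-double cosets $PgQ$, $g\in G$. Then the rank of this matrix (over $\mathbb{Q}$) is equal to the number of $G$-conjugacy classes of cyclic subgroups of $H$.
   Context: Two subgroups $P,Q\leq H$ are $G$-conjugate if $Q=gPg^{-1}$ for some $g\in G$. The number $|P\backslash G/Q|$ depends only on the $G$-conjugacy classes of $P$ and $Q$. *)

From mathcomp Require Import all_boot all_order all_fingroup all_solvable all_algebra.
Set Implicit Arguments. Unset Strict Implicit. Unset Printing Implicit Defensive.
Import GRing.Theory.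
Local Open Scope group_scope.

Definition double_cosets (gT : finGroupType) (P Q G : {set gT}) : {set {set gT}} :=
  [set P :* g * Q | g in G].

Definition subgroup_classes (gT : finGroupType) (G H : {set gT})
    (C : {group gT} -> bool) : {set {set {set gT}}} :=
  [set (gval P) :^: G | P : {group gT} in [pred P : {group gT} | (P \subset H) && C P]].

Definition class_rep (gT : finGroupType) (K : {set {set gT}}) : {set gT} :=
  odflt set0 [pick P in K].

Definition double_coset_matrix (gT : finGroupType) (G H : {set gT}) :
    'M[rat]_(#|subgroup_classes G H predT|) :=
  \matrix_(i, j)
     (#|double_cosets (class_rep (enum_val i)) (class_rep (enum_val j)) G|)%:R%R.

From mathcomp Require Import all_boot all_order all_fingroup all_solvable all_algebra.
Set Implicit Arguments. Unset Strict Implicit. Unset Printing Implicit Defensive.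
Import GRing.Theory Num.Theory.

(* Counting pairs gives |P\G/Q| |P| |Q| = sum_(x in P) #{g in G | x in Q^g}, and the
   summand only depends on the G-class of <x>.  Grouping the x by that class factors
   the double coset matrix as D * M, where D counts the elements of P generating a
   subgroup of each cyclic class and M is the table of marks restricted to cyclic
   subgroups; so the rank is at most the number of cyclic classes.  Ordered by
   subgroup order, both factors are triangular with nonzero diagonal on the cyclic
   classes, so the principal submatrix indexed by the cyclic classes is invertible. *)

Lemma natr_div_neq0 {R : numFieldType} (m n : nat) :
  (m%:R / n%:R != 0 :> R)%R = (0 < m) && (0 < n).
Proof. by rewrite mulf_eq0 invr_eq0 !pnatr_eq0 negb_or !lt0n. Qed.

Section MatrixRank.
Variable F : fieldType.
Local Open Scope ring_scope.

Lemma weighted_trig_unitmx n (X : 'M[F]_n) (w : 'I_n -> nat) :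
    (forall k, X k k != 0) -> (forall k l, k != l -> X k l != 0 -> (w k < w l)%N) ->
  X \in unitmx.
Proof.
move=> Xkk Xkl; rewrite -row_free_unit; apply: inj_row_free => v vX0.
apply/rowP=> k0; rewrite mxE; apply/eqP/contraT => vk0.
(* For l of minimal weight in the support of v, only the diagonal term of (v X)_l survives. *)
have [l vl minl] := @arg_minnP _ k0 (fun k => v 0 k != 0) w vk0.
have /rowP/(_ l) := vX0; rewrite !mxE (bigD1 l) //= big1 ?addr0 => [/eqP|k klk].
  by rewrite mulf_eq0 (negbTE vl) (negbTE (Xkk l)).
apply/eqP; rewrite mulf_eq0; apply: contraT; rewrite negb_or => /andP[vk Xkl'].
by have := minl k vk; rewrite leqNgt Xkl.
Qed.

Lemma mxrank_mxsub m1 m2 n1 n2 (f : 'I_m2 -> 'I_m1) (g : 'I_n2 -> 'I_n1) (A : 'M[F]_(m1, n1)) :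
  (\rank (mxsub f g A) <= \rank A)%N.
Proof.
have ->: mxsub f g A = rowsub f 1%:M *m A *m colsub g 1%:M.
  by rewrite mulmx_colsub mulmx1 mul_rowsub_mx mul1mx; apply/matrixP => i j; rewrite !mxE.
exact: leq_trans (mxrankM_maxl _ _) (mxrankM_maxr _ _).
Qed.
End MatrixRank.

Section DoubleCosets.
Variable gT : finGroupType.
Local Open Scope group_scope.
Implicit Types (G P Q : {group gT}) (g x : gT).

Lemma card_double_coset P Q g :
  (#|P :* g * Q|%g * #|P :&: Q :^ g^-1| = #|P| * #|Q|)%N.
Proof.
have ->: P :* g * Q = (P * Q :^ g^-1) :* g.
  rewrite conjsgE invgK -!mulgA; congr (_ * _).
  by rewrite !mulgA -[_ * [set g^-1] * [set g]]mulgA mulg_set1 mulVg mulg1.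
by rewrite card_rcoset -(cardJg Q g^-1) (mul_cardG P (Q :^ g^-1)%G).
Qed.

Lemma double_coset_self P Q g : g \in P :* g * Q.
Proof. by apply/mulsgP; exists g 1; rewrite ?group1 ?mulg1 ?rcoset_refl. Qed.

Lemma double_coset_fiber G P Q g0 : P \subset G -> Q \subset G -> g0 \in G ->
  [set g in G | P :* g * Q == P :* g0 * Q] = P :* g0 * Q.
Proof.
move=> sPG sQG Gg0; apply/setP => g; rewrite !inE; apply/idP/idP.
  by case/andP=> _ /eqP <-; apply: double_coset_self.
case/mulsgP=> _ q /rcosetP[p Pp ->] Qq ->.
rewrite !groupM ?(subsetP sPG p) ?(subsetP sQG q) //=.
by rewrite !rcosetM (rcoset_id Pp) -mulgA lcoset_id.
Qed.

Lemma card_double_cosets_sum G P Q : P \subset G -> Q \subset G ->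
  (#|double_cosets P Q G| * (#|P| * #|Q|) = \sum_(g in G) #|P :&: Q :^ g^-1|)%N.
Proof.
move=> sPG sQG.
rewrite (partition_big (fun g => P :* g * Q) (mem (double_cosets P Q G))) /=;
  last by move=> g Gg; apply: imset_f.
rewrite -sum_nat_const; apply: eq_bigr => _ /imsetP[g0 Gg0 ->].
have cardD: #|P :* g0 * Q| > 0 by apply/card_gt0P; exists g0; apply: double_coset_self.
rewrite (eq_bigr (fun _ => (#|P| * #|Q|) %/ #|P :* g0 * Q|%g)%N); last first.
  by move=> g /andP[_ /eqP eqD]; rewrite -(card_double_coset P Q g) eqD mulKn.
rewrite sum_nat_cond_const double_coset_fiber // [RHS]mulnC divnK //.
by rewrite -(card_double_coset P Q g0) dvdn_mulr.
Qed.

Lemma sum_card_setI_conjg (A B : {set gT}) G :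
  \sum_(g in G) #|A :&: B :^ g| = \sum_(x in A) #|[set g in G | x \in B :^ g]|.
Proof.
under eq_bigr do rewrite -sum1_card.
under [RHS]eq_bigr do rewrite -sum1_card.
rewrite (exchange_big_dep (mem A)) /=; last by move=> g x _; rewrite inE => /andP[].
by apply: eq_bigr => x Ax; apply: eq_bigl => g; rewrite !inE Ax.
Qed.

Lemma card_double_cosets_count G P Q : P \subset G -> Q \subset G ->
  (#|double_cosets P Q G| * (#|P| * #|Q|) =
   \sum_(x in P) #|[set g in G | x \in Q :^ g]|)%N.
Proof.
move=> sPG sQG; rewrite card_double_cosets_sum // -sum_card_setI_conjg.
by rewrite (reindex_inj invg_inj); apply: eq_big => [g|g _]; rewrite ?groupV ?invgK.
Qed.

End DoubleCosets.

Section SubgroupClasses.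
Variables (gT : finGroupType) (G H : {group gT}).
Local Open Scope group_scope.
Hypothesis sHG : H \subset G.
Implicit Types (C : {group gT} -> bool) (K L : {set {set gT}}) (x y g : gT).

Lemma conjugates_conjG (A : {set gT}) y : y \in G -> (A :^ y) :^: G = A :^: G.
Proof. by move=> Gy; rewrite conjugates_conj lcoset_id. Qed.

Lemma mem_conjugates_self (A : {set gT}) : A \in A :^: G.
Proof. by apply/imsetP; exists 1; rewrite ?group1 ?conjsg1. Qed.

Lemma class_repP C K : K \in subgroup_classes G H C ->
  exists P : {group gT}, exists2 y, y \in G &
    [/\ P \subset H, C P, class_rep K = P :^ y & K = P :^: G].
Proof.
case/imsetP=> P; rewrite inE => /andP[sPH CP] ->; exists P.
rewrite /class_rep; case: pickP => [R | /(_ P)]; last by rewrite mem_conjugates_self.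
by case/imsetP=> y Gy ->; exists y.
Qed.

Lemma class_repK C K : K \in subgroup_classes G H C -> class_rep K :^: G = K.
Proof. by case/class_repP=> P [y Gy [_ _ -> ->]]; rewrite conjugates_conjG. Qed.

Lemma class_rep_conj C K (A : {set gT}) : K \in subgroup_classes G H C -> A \in K ->
  exists2 y, y \in G & class_rep K = A :^ y.
Proof.
case/class_repP=> P [y Gy [_ _ -> ->]] /imsetP[z Gz ->].
by exists (z^-1 * y); rewrite ?groupM ?groupV // conjsgM conjsgK.
Qed.

Lemma class_rep_group C K : K \in subgroup_classes G H C -> group_set (class_rep K).
Proof. by case/class_repP=> P [y _ [_ _ -> _]]; apply: groupP. Qed.

Lemma class_rep_subG C K : K \in subgroup_classes G H C -> class_rep K \subset G.
Proof.
case/class_repP=> P [y Gy [sPH _ -> _]].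
by rewrite sub_conjg conjGid ?groupV // (subset_trans sPH).
Qed.

Lemma class_rep_gt0 C K : K \in subgroup_classes G H C -> 0 < #|class_rep K|.
Proof. by move/class_rep_group/group_setP=> [rep1 _]; apply/card_gt0P; exists 1. Qed.

Lemma cycle_sub_class_rep C K x : K \in subgroup_classes G H C ->
  x \in class_rep K -> <[x]> \subset class_rep K.
Proof. by move=> clK; rewrite -[class_rep K]/(gval (Group (class_rep_group clK))) cycle_subG. Qed.

Lemma class_rep_cyclic K :
  K \in subgroup_classes G H (fun P : {group gT} => cyclic P) -> cyclic (class_rep K).
Proof. by case/class_repP=> P [y _ [_ cycP -> _]]; rewrite cyclicJ. Qed.

Lemma cyclic_classes_sub :
  subgroup_classes G H (fun P : {group gT} => cyclic P) \subset subgroup_classes G H predT.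
Proof.
apply/subsetP=> K /imsetP[P]; rewrite inE => /andP[sPH _] ->.
by apply: imset_f; rewrite inE sPH.
Qed.

Lemma class_rep_sub_conj_ltn C1 C2 K L g :
    K \in subgroup_classes G H C1 -> L \in subgroup_classes G H C2 -> g \in G ->
  K != L -> class_rep K \subset class_rep L :^ g -> #|class_rep K| < #|class_rep L|.
Proof.
move=> clK clL Gg neKL sKL; rewrite ltnNge; apply: contra neKL => leLK.
have eKL : class_rep K = class_rep L :^ g by apply/eqP; rewrite eqEcard sKL cardJg.
by rewrite -(class_repK clK) -(class_repK clL) eKL conjugates_conjG.
Qed.

End SubgroupClasses.

Section CyclicDecomposition.
Variables (gT : finGroupType) (G H : {group gT}).
Local Open Scope group_scope.

Local Notation cyclic_classes := (subgroup_classes G H (fun P : {group gT} => cyclic P)).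
Local Notation cyclic_rep l := (class_rep (enum_val (l : 'I_#|cyclic_classes|))).

Definition cycle_class (x : gT) := <[x]> :^: G.

Definition transporter (C Q : {set gT}) := [set g in G | C \subset Q :^ g].

Lemma card_transporter_conjg (C Q : {set gT}) y : y \in G ->
  #|transporter (C :^ y) Q| = #|transporter C Q|.
Proof.
move=> Gy; rewrite -[RHS](card_rcoset _ y); apply: eq_card => g.
by rewrite mem_rcoset !inE groupMr ?groupV // sub_conjg -conjsgM.
Qed.

Lemma cycle_class_in C K x : K \in subgroup_classes G H C -> x \in class_rep K ->
  cycle_class x \in cyclic_classes.
Proof.
case/class_repP=> P [y Gy [sPH _ -> _]]; rewrite mem_conjg => Px.
apply/imsetP; exists <[x ^ y^-1]>%G; first by rewrite inE cycle_cyclic cycle_subG (subsetP sPH).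
by rewrite /cycle_class /= cycleJ conjugates_conjG ?groupV.
Qed.

Lemma card_double_cosets_cyclic (P Q : {group gT}) :
    P \subset G -> Q \subset G -> (forall x, x \in P -> cycle_class x \in cyclic_classes) ->
  (#|double_cosets P Q G| * (#|P| * #|Q|) =
   \sum_(l < #|cyclic_classes|)
     #|[set x in P | cycle_class x == enum_val l]| * #|transporter (cyclic_rep l) Q|)%N.
Proof.
move=> sPG sQG cycP; rewrite card_double_cosets_count //.
transitivity (\sum_(x in P) \sum_(l < #|cyclic_classes|)
    (cycle_class x == enum_val l) * #|transporter (cyclic_rep l) Q|)%N.
  apply: eq_bigr => x Px; have clx := cycP x Px.
  rewrite (bigD1 (enum_rank_in clx (cycle_class x))) //= enum_rankK_in // eqxx mul1n.
  rewrite big1 ?addn0 => [|l]; last first.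
    case: (cycle_class x =P enum_val l) => // exl /negP[].
    by apply/eqP; rewrite -{1}(enum_valK_in clx l) -exl.
  have [y Gy ->] := class_rep_conj clx (mem_conjugates_self G <[x]>).
  by rewrite card_transporter_conjg //; apply: eq_card => g; rewrite !inE cycle_subG.
rewrite exchange_big; apply: eq_bigr => l _; rewrite -big_distrl /=; congr (_ * _)%N.
by rewrite -sum1_card big_mkcond [RHS]big_mkcond; apply: eq_bigr => x _; rewrite inE; case: (x \in P).
Qed.

End CyclicDecomposition.

Section Factorization.
Variables (gT : finGroupType) (G H : {group gT}).
Hypothesis sHG : (H \subset G)%g.
Local Open Scope ring_scope.

Local Notation classes := (subgroup_classes G H predT).
Local Notation cyclic_classes := (subgroup_classes G H (fun P : {group gT} => cyclic P)).
Local Notation cyclic_rep l := (class_rep (enum_val (l : 'I_#|cyclic_classes|))).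

Definition cycle_density (P : {set gT}) (l : 'I_#|cyclic_classes|) : rat :=
  #|[set x in P | cycle_class G x == enum_val l]|%:R / #|P|%:R.

(* g is in [transporter C Q] iff C fixes the coset Q g, so this is the number of
   fixed points of the l-th cyclic representative on Q\G. *)
Definition mark (l : 'I_#|cyclic_classes|) (Q : {set gT}) : rat :=
  #|transporter G (cyclic_rep l) Q|%:R / #|Q|%:R.

Lemma card_double_cosets_class_rep C1 C2 K L :
    K \in subgroup_classes G H C1 -> L \in subgroup_classes G H C2 ->
  #|double_cosets (class_rep K) (class_rep L) G|%:R =
  \sum_(l < #|cyclic_classes|) cycle_density (class_rep K) l * mark l (class_rep L).
Proof.
move=> clK clL; set P := Group (class_rep_group clK); set Q := Group (class_rep_group clL).
have := @card_double_cosets_cyclic _ G H P Q (class_rep_subG sHG clK) (class_rep_subG sHG clL)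
  (fun x => cycle_class_in clK).
move=> /(congr1 (fun n => n%:R / (#|P|%:R * #|Q|%:R) : rat)).
have card_neq0 (R : {group gT}) : #|R|%:R != 0 :> rat by rewrite pnatr_eq0 -lt0n cardG_gt0.
rewrite !natrM mulfK ?mulf_neq0 ?card_neq0 // => ->.
rewrite natr_sum mulr_suml; apply: eq_bigr => l _.
by rewrite natrM mulf_div.
Qed.

Definition density_mx (S : {set {set {set gT}}}) : 'M[rat]_(#|S|, #|cyclic_classes|) :=
  \matrix_(i, l) cycle_density (class_rep (enum_val i)) l.

Definition mark_mx (S : {set {set {set gT}}}) : 'M[rat]_(#|cyclic_classes|, #|S|) :=
  \matrix_(l, j) mark l (class_rep (enum_val j)).

Lemma double_coset_matrix_factor :
  double_coset_matrix G H = density_mx classes *m mark_mx classes.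
Proof.
apply/matrixP => i j; rewrite !mxE (card_double_cosets_class_rep (enum_valP i) (enum_valP j)).
by apply: eq_bigr => l _; rewrite !mxE.
Qed.

Lemma density_mx_unit : density_mx cyclic_classes \in unitmx.
Proof.
rewrite -unitmx_tr.
apply: (@weighted_trig_unitmx _ _ _ (fun k => #|cyclic_rep k|)) => [k|k l kl]; rewrite !mxE.
  have /cyclicP[x rep_x] := class_rep_cyclic (enum_valP k).
  rewrite natr_div_neq0 (class_rep_gt0 (enum_valP k)) andbT.
  apply/card_gt0P; exists x; rewrite inE rep_x cycle_id /cycle_class -rep_x.
  by rewrite (class_repK (enum_valP k)) eqxx.
rewrite /cycle_density natr_div_neq0 => /andP[/card_gt0P[x /setIdP[rep_x /eqP clx]] _].
have /(class_rep_conj (enum_valP k))[y Gy rep_k]: <[x]>%g \in enum_val k.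
  by rewrite -clx mem_conjugates_self.
apply: (class_rep_sub_conj_ltn (enum_valP k) (enum_valP l) Gy).
  by rewrite (inj_eq enum_val_inj).
by rewrite rep_k conjSg (cycle_sub_class_rep (enum_valP l)).
Qed.

Lemma mark_mx_unit : mark_mx cyclic_classes \in unitmx.
Proof.
apply: (@weighted_trig_unitmx _ _ _ (fun k => #|cyclic_rep k|)) => [k|k l kl];
  rewrite !mxE /mark natr_div_neq0.
  rewrite (class_rep_gt0 (enum_valP k)) andbT; apply/card_gt0P; exists 1%g.
  by rewrite inE group1 conjsg1 subxx.
case/andP=> /card_gt0P[g /setIdP[Gg sKL]] _.
by apply: (class_rep_sub_conj_ltn (enum_valP k) (enum_valP l) Gg); rewrite ?(inj_eq enum_val_inj).
Qed.

Lemma double_coset_matrix_cyclic_submx (r : 'I_#|cyclic_classes| -> 'I_#|classes|) :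
    (forall k, enum_val (r k) = enum_val k) ->
  mxsub r r (double_coset_matrix G H) = density_mx cyclic_classes *m mark_mx cyclic_classes.
Proof.
move=> er; rewrite double_coset_matrix_factor mxsub_mul.
by congr (_ *m _); apply/matrixP => i j; rewrite !mxE er.
Qed.

End Factorization.

Theorem theorem1p1 (gT : finGroupType) (G H : {group gT}) :
  H \subset G ->
  \rank (double_coset_matrix G H) =
  #|subgroup_classes G H (fun P : {group gT} => cyclic P)|.
Proof.
move=> sHG; apply/eqP; rewrite eqn_leq; apply/andP; split.
  by rewrite (double_coset_matrix_factor sHG) (leq_trans (mxrankM_maxl _ _)) ?rank_leq_col.
pose r k := enum_rank_in (subsetP (cyclic_classes_sub G H) _ (enum_valP k)) (enum_val k).
apply: leq_trans (mxrank_mxsub r r _).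
rewrite (@double_coset_matrix_cyclic_submx _ _ _ sHG r) => [|k].
  by rewrite mxrank_unit // unitmx_mul density_mx_unit mark_mx_unit.
by rewrite /r enum_rankK_in // (subsetP (cyclic_classes_sub G H)) ?enum_valP.
Qed.
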